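(* The categories $\mathsf{DeV^F}$ and $\mathsf{DeV}$ are dually isomorphic via the following contravariant functors, both the identity on objects: a morphism $S\colon A\to B$ of $\mathsf{DeV^F}$ is sent to $f_S\colon B\to A$, $f_S(b)=\bigvee\{a\in A\mid a\mathrel{S}b\}$; a de Vries morphism $f\colon A\to B$ is sent to $S_f\colon B\to A$, where $b\mathrel{S_f}a$ iff there is $a'\in A$ with $a'\prec a$ and $b\le f(a')$. These assignments are well-defined contravariant functors, and $S_{f_S}=S$ and $f_{S_f}=f$ for all morphisms $S$ of $\mathsf{DeV^F}$ and $f$ of $\mathsf{DeV}$.
   Context: A de Vries algebra is a pair $(B,\prec)$ with $B$ a complete boolean algebra and $\prec\subseteq B\times B$ satisfying (S1) $0\prec0$, $1\prec1$; (S2) $a,b\prec c\Rightarrow(a\vee b)\prec c$; (S3) $a\prec c,d\Rightarrow a\prec(c\wedge d)$; (S4) $a\le b\prec c\le d\Rightarrow a\prec d$; (S5) $a\prec b\Rightarrow a\le b$; (S6) $a\prec b\Rightarrow\neg b\prec\neg a$; (S7) $a\prec b\Rightarrow\exists c\,(a\prec c\prec b)$; (S8) $a\ne0\Rightarrow\exists b\ne0,\ b\prec a$. $\mathsf{DeV^F}$: objects de Vries algebras; morphisms $(A,\prec_A)\to(B,\prec_B)$ are relations $S\subseteq A\times B$ satisfying (S1)–(S4) (with $S$ in place of $\prec$), $S\circ\prec_A=S=\prec_B\circ S$, and additionally (F1) $a\mathrel{S}0\Rightarrow a=0$; (F2) whenever $b_1\prec_B b_2$ there is $a\in A$ with $\neg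 a\mathrel{S}\neg b_1$ and $a\mathrel{S}b_2$. Identity on $(A,\prec)$ is $\prec$; composition is relational ($a\mathrel{(S_2\circ S_1)}c$ iff $\exists b$, $a\mathrel{S_1}b\mathrel{S_2}c$). $\mathsf{DeV}$: objects de Vries algebras; morphisms (de Vries morphisms) are functions $f\colon A\to B$ with (M1) $f(0)=0$; (M2) $f(a\wedge b)=f(a)\wedge f(b)$; (M3) $a\prec b$ implies $\neg f(\neg a)\prec f(b)$; (M4) $f(a)=\bigvee\{f(b)\mid b\prec a\}$. Identities are identity functions and the composite of $f\colon A\to B$ and $g\colon B\to C$ is $(g*f)(a)=\bigvee\{g(f(b))\mid b\prec a\}$. *)

(* boolean algebras are mathcomp's ctbDistrLatticeType
   (complemented distributive lattices with top and bottom). *)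
From HB Require Import structures.
From mathcomp Require Import all_boot all_order.
From Stdlib Require Import ClassicalEpsilon.
Import Order.Theory.

Set Implicit Arguments.
Unset Strict Implicit.
Unset Printing Implicit Defensive.

Local Open Scope order_scope.

Section Defs.
Context {d : Order.disp_t} {T : ctbDistrLatticeType d}.

Definition is_sup (P : T -> Prop) (s : T) : Prop :=
  (forall x, P x -> x <= s) /\ (forall u, (forall x, P x -> x <= u) -> s <= u).

Definition complete_lattice : Prop := forall P : T -> Prop, exists s, is_sup P s.

(** the join \bigvee P (it is the supremum whenever T is complete) *)
Definition bigvee (P : T -> Prop) : T :=
  epsilon (inhabits (\bot : T)) (is_sup P).

(** de Vries algebra axioms (S1)-(S8), plus completeness of B *)
Definition is_deVries (prec : T -> T -> Prop) : Prop :=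
  complete_lattice /\
  (prec \bot \bot /\ prec \top \top) /\
  (forall a b c, prec a c -> prec b c -> prec (a `|` b) c) /\
  (forall a c e, prec a c -> prec a e -> prec a (c `&` e)) /\
  (forall a b c e, a <= b -> prec b c -> c <= e -> prec a e) /\
  (forall a b, prec a b -> a <= b) /\
  (forall a b, prec a b -> prec (~` b) (~` a)) /\
  (forall a b, prec a b -> exists c, prec a c /\ prec c b) /\
  (forall a, a != \bot -> exists b, b != \bot /\ prec b a).
End Defs.

(** relational composition: a (S2 o S1) c iff exists b, a S1 b S2 c *)
Definition relcomp {X Y Z : Type}
  (S1 : X -> Y -> Prop) (S2 : Y -> Z -> Prop) : X -> Z -> Prop :=
  fun a c => exists b, S1 a b /\ S2 b c.

Section Morphisms.
Context {dA : Order.disp_t} {A : ctbDistrLatticeType dA}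
        {dB : Order.disp_t} {B : ctbDistrLatticeType dB}.

Definition rel_S1_S4 (S : A -> B -> Prop) : Prop :=
  [/\ S \bot \bot /\ S \top \top,
      (forall a b c, S a c -> S b c -> S (a `|` b) c),
      (forall a c e, S a c -> S a e -> S a (c `&` e)) &
      (forall a b c e, a <= b -> S b c -> c <= e -> S a e)].

Definition DeVF_morphism (precA : A -> A -> Prop) (precB : B -> B -> Prop)
  (S : A -> B -> Prop) : Prop :=
  [/\ rel_S1_S4 S,
      (forall a b, relcomp precA S a b <-> S a b),
      (forall a b, relcomp S precB a b <-> S a b),
      (forall a, S a \bot -> a = \bot) &
      (forall b1 b2, precB b1 b2 -> exists a, S (~` a) (~` b1) /\ S a b2)].

Definition DeV_morphism (precA : A -> A -> Prop) (precB : B -> B -> Prop)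
  (f : A -> B) : Prop :=
  [/\ f \bot = \bot,
      (forall a b, f (a `&` b) = f a `&` f b),
      (forall a b, precA a b -> precB (~` (f (~` a))) (f b)) &
      (forall a, f a = bigvee (fun y => exists b, precA b a /\ y = f b))].

Definition f_of (S : A -> B -> Prop) : B -> A :=
  fun b => bigvee (fun a => S a b).

Definition S_of (precA : A -> A -> Prop) (f : A -> B) : B -> A -> Prop :=
  fun b a => exists a', precA a' a /\ b <= f a'.
End Morphisms.

Definition dev_comp {dA dB dC : Order.disp_t} {A : ctbDistrLatticeType dA}
  {B : ctbDistrLatticeType dB} {C : ctbDistrLatticeType dC}
  (precA : A -> A -> Prop) (f : A -> B) (g : B -> C) : A -> C :=
  fun a => bigvee (fun y => exists b, precA b a /\ y = g (f b)).

(* The key fact is that a DeV^F morphism S can be recovered from its join map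
   f_S "up to one step of the proximity": b' << b implies f_S(b') S b.  Indeed,
   (F2) gives a with ~a S ~b' and a S b, and for every x S b' the meet
   x /\ ~a S b' /\ ~b' = 0, so x <= a by (F1); hence f_S(b') <= a.  Combined
   with the interpolation axiom (S7) and with (M4), which says that a de Vries
   morphism is determined by its values on the "way below" elements, this turns
   every functoriality and round-trip identity into a comparison of two joins. *)
From HB Require Import structures.
From mathcomp Require Import all_boot all_order.
From Stdlib Require Import ClassicalEpsilon.
Import Order.Theory.
Local Open Scope order_scope.

Set Implicit Arguments.
Unset Strict Implicit.

Section CompleteBooleanAlgebra.
Context {d : Order.disp_t} {T : ctbDistrLatticeType d}.
Implicit Types (x y t : T) (P Q : T -> Prop).

Lemma le_of_disjC x y : x `&` ~` y = \bot -> x <= y.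
Proof. by move=> h; rewrite -[y]complK -disj_leC h. Qed.

Lemma le_joinC_of_meet x y t : y `&` x <= t -> y <= t `|` ~` x.
Proof.
move=> h; rewrite -[y]meetx1 -(joinxC x) meetUr.
by apply: leU2 => //; apply: leIr.
Qed.

Hypothesis complT : @complete_lattice _ T.

Lemma bigvee_sup P : is_sup P (bigvee P).
Proof. exact: epsilon_spec (complT P). Qed.

Lemma le_bigvee P x : P x -> x <= bigvee P.
Proof. by case: (bigvee_sup P) => h _; apply: h. Qed.

Lemma bigvee_le P t : (forall x, P x -> x <= t) -> bigvee P <= t.
Proof. by case: (bigvee_sup P) => _; apply. Qed.

Lemma eq_bigvee P Q :
  (forall x, P x -> x <= bigvee Q) -> (forall x, Q x -> x <= bigvee P) ->
  bigvee P = bigvee Q.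
Proof. by move=> hPQ hQP; apply: le_anti; rewrite !bigvee_le. Qed.

(* Infinite distributivity, via the residuation y /\ x <= t <-> y <= t \/ ~x. *)
Lemma meet_bigvee_le P x t :
  (forall y, P y -> x `&` y <= t) -> x `&` bigvee P <= t.
Proof.
move=> h; have hP : bigvee P <= t `|` ~` x.
  by apply: bigvee_le => y Py; apply: le_joinC_of_meet; rewrite meetC h.
apply: le_trans (leI2 (lexx x) hP) _.
by rewrite meetUr meetxC joinx0 leIr.
Qed.

End CompleteBooleanAlgebra.

Lemma meet_morph_homo {dA dB : Order.disp_t} {A : ctbDistrLatticeType dA}
    {B : ctbDistrLatticeType dB} (f : A -> B) :
  (forall a b, f (a `&` b) = f a `&` f b) -> {homo f : x y / x <= y}.
Proof. by move=> fI x y /meet_idPl <-; rewrite fI leIr. Qed.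

Section DeVriesAlgebra.
Context {d : Order.disp_t} {T : ctbDistrLatticeType d} (prec : T -> T -> Prop).
Hypothesis deV : is_deVries prec.

Lemma deVries_complete : @complete_lattice _ T.
Proof. by case: deV. Qed.

Lemma prec_bot : prec \bot \bot.
Proof. by case: deV => _ [[]]. Qed.

Lemma prec_top : prec \top \top.
Proof. by case: deV => _ [[]]. Qed.

Lemma prec_join a b c : prec a c -> prec b c -> prec (a `|` b) c.
Proof. by case: deV => _ [_ [h _]]; apply: h. Qed.

Lemma prec_meet a c e : prec a c -> prec a e -> prec a (c `&` e).
Proof. by case: deV => _ [_ [_ [h _]]]; apply: h. Qed.

Lemma le_prec_le a b c e : a <= b -> prec b c -> c <= e -> prec a e.
Proof. by case: deV => _ [_ [_ [_ [h _]]]]; apply: h. Qed.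

Lemma prec_le a b : prec a b -> a <= b.
Proof. by case: deV => _ [_ [_ [_ [_ [h _]]]]]; apply: h. Qed.

Lemma prec_compl a b : prec a b -> prec (~` b) (~` a).
Proof. by case: deV => _ [_ [_ [_ [_ [_ [h _]]]]]]; apply: h. Qed.

Lemma prec_interpolate a b : prec a b -> exists c, prec a c /\ prec c b.
Proof. by case: deV => _ [_ [_ [_ [_ [_ [_ [h _]]]]]]]; apply: h. Qed.

Lemma prec_below a : a != \bot -> exists b, b != \bot /\ prec b a.
Proof. by case: deV => _ [_ [_ [_ [_ [_ [_ [_ h]]]]]]]; apply: h. Qed.

(* If a were not the join s of its way-below elements, (S8) would put a
   nonzero b << a /\ ~s, which lies both below s and below ~s. *)
Lemma bigvee_prec a : bigvee (fun x => prec x a) = a.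
Proof.
have complT := deVries_complete.
set s := bigvee _.
have le_s_a : s <= a by apply: bigvee_le => // x; apply: prec_le.
apply: le_anti; rewrite le_s_a /=.
have [/le_of_disjC //|ne0] := eqVneq (a `&` ~` s) \bot.
have [b [b_ne0 prec_b]] := prec_below ne0.
have le_b_s : b <= s.
  by apply: le_bigvee => //; apply: le_prec_le (lexx b) prec_b (leIl _ _).
have le_b_Cs : b <= ~` s := le_trans (prec_le prec_b) (leIr _ _).
have : b <= s `&` ~` s by rewrite lexI le_b_s le_b_Cs.
by rewrite meetxC lex0 (negbTE b_ne0).
Qed.

Lemma S_of_id a a' : S_of prec id a a' <-> prec a a'.
Proof.
split=> [[x [prec_x le_a]]|]; first exact: le_prec_le le_a prec_x (lexx _).
by case/prec_interpolate=> c [prec_ac prec_ca']; exists c; split; last exact: prec_le.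
Qed.

End DeVriesAlgebra.

Section JoinMapOfRelation.
Context {dA : Order.disp_t} {A : ctbDistrLatticeType dA} (precA : A -> A -> Prop)
        {dB : Order.disp_t} {B : ctbDistrLatticeType dB} (precB : B -> B -> Prop).
Hypotheses (deVA : is_deVries precA) (deVB : is_deVries precB).
Variable S : A -> B -> Prop.
Hypothesis morS : DeVF_morphism precA precB S.

Let complA := deVries_complete deVA.

Lemma le_f_of a b : S a b -> a <= f_of S b.
Proof. exact: le_bigvee. Qed.

Lemma f_of_le b t : (forall a, S a b -> a <= t) -> f_of S b <= t.
Proof. exact: bigvee_le. Qed.

Lemma f_of_homo : {homo f_of S : b b' / b <= b'}.
Proof.
case: morS => [[_ _ _ S4] _ _ _ _] b b' le_bb'.
by apply: f_of_le => a Sab; apply: le_f_of; apply: S4 _ _ _ _ (lexx a) Sab le_bb'.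
Qed.

Lemma f_of_prec_rel b' b : precB b' b -> S (f_of S b') b.
Proof.
case: morS => [[_ _ S3 S4] _ _ F1 F2] prec_b'b.
have [a [S_Ca_Cb' S_ab]] := F2 _ _ prec_b'b.
apply: (S4 _ a _ b _ S_ab (lexx b)); apply: f_of_le => x S_xb'.
apply: le_of_disjC; apply: F1; rewrite -(meetxC b'); apply: S3.
- exact: S4 _ _ _ _ (leIl _ _) S_xb' (lexx _).
- exact: S4 _ _ _ _ (leIr _ _) S_Ca_Cb' (lexx _).
Qed.

Lemma f_of_bot : f_of S \bot = \bot.
Proof.
case: morS => [_ _ _ F1 _]; apply/eqP; rewrite -lex0.
by apply: f_of_le => a /F1 ->.
Qed.

Lemma f_of_meet b b' : f_of S (b `&` b') = f_of S b `&` f_of S b'.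
Proof.
case: morS => [[_ _ S3 S4] _ _ _ _]; apply: le_anti; apply/andP; split.
  by rewrite lexI !f_of_homo ?leIl ?leIr.
apply: meet_bigvee_le => // a' S_a'b'; rewrite meetC.
apply: meet_bigvee_le => // a S_ab; apply: le_f_of.
by apply: S3; [apply: S4 (leIr _ _) S_ab _ | apply: S4 (leIl _ _) S_a'b' _].
Qed.

Lemma f_of_prec b b' : precB b b' -> precA (~` f_of S (~` b)) (f_of S b').
Proof.
case: morS => [_ S_precA _ _ F2] prec_bb'.
have [a [S_Ca_Cb S_ab']] := F2 _ _ prec_bb'.
have [x [prec_ax S_xb']] := (S_precA a b').2 S_ab'.
apply: (le_prec_le deVA _ prec_ax (le_f_of S_xb')).
by rewrite leCx; apply: le_f_of.
Qed.

Lemma f_of_approx b :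
  f_of S b = bigvee (fun y => exists b', precB b' b /\ y = f_of S b').
Proof.
case: morS => [_ _ S_precB _ _]; apply: eq_bigvee => // [a S_ab|_ [b' [prec_b'b ->]]].
  have [b' [S_ab' prec_b'b]] := (S_precB a b).2 S_ab.
  by apply: le_trans (le_f_of S_ab') _; apply: le_bigvee => //; exists b'.
by apply: f_of_homo; apply: prec_le prec_b'b.
Qed.

Lemma DeV_morphism_f_of : DeV_morphism precB precA (f_of S).
Proof.
split; [exact: f_of_bot | exact: f_of_meet | exact: f_of_prec | exact: f_of_approx].
Qed.

Lemma S_of_f_of a b : S_of precB (f_of S) a b <-> S a b.
Proof.
case: morS => [[_ _ _ S4] _ S_precB _ _]; split.
  by move=> [b' [prec_b'b le_a]]; apply: S4 le_a (f_of_prec_rel prec_b'b) (lexx b).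
move=> S_ab; have [b' [S_ab' prec_b'b]] := (S_precB a b).2 S_ab.
by exists b'; split; last exact: le_f_of.
Qed.

End JoinMapOfRelation.

Section RelationOfDeVriesMorphism.
Context {dA : Order.disp_t} {A : ctbDistrLatticeType dA} (precA : A -> A -> Prop)
        {dB : Order.disp_t} {B : ctbDistrLatticeType dB} (precB : B -> B -> Prop).
Hypotheses (deVA : is_deVries precA) (deVB : is_deVries precB).
Variable f : A -> B.
Hypothesis morf : DeV_morphism precA precB f.

Lemma DeV_morphism_homo : {homo f : x y / x <= y}.
Proof. by case: morf => _ fI _ _; apply: meet_morph_homo. Qed.

Lemma DeV_morphism_top : f \top = \top.
Proof.
case: morf => f0 _ f_prec _; apply/eqP; rewrite -le1x.
by have := f_prec _ _ (prec_top deVA); rewrite compl1 f0 compl0 => /(prec_le deVB).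
Qed.

Lemma DeV_morphism_le_compl a : f a <= ~` f (~` a).
Proof. by case: morf => f0 fI _ _; rewrite -disj_leC -fI meetxC f0. Qed.

Lemma rel_S1_S4_S_of : rel_S1_S4 (S_of precA f).
Proof.
have f_homo := DeV_morphism_homo; case: morf => _ fI _ _; split.
- split; [exists \bot | exists \top]; rewrite ?DeV_morphism_top.
    by split; [apply: prec_bot | rewrite le0x].
  by split; [apply: prec_top | rewrite lexx].
- move=> b b' a [a1 [prec_a1 le_b]] [a2 [prec_a2 le_b']].
  exists (a1 `|` a2); split; first exact: prec_join.
  by rewrite leUx (le_trans le_b) ?(le_trans le_b') ?f_homo ?leUl ?leUr.
- move=> b a a' [a1 [prec_a1 le_b1]] [a2 [prec_a2 le_b2]].
  exists (a1 `&` a2); split; last by rewrite fI lexI le_b1 le_b2.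
  apply: (prec_meet deVA).
    exact: (le_prec_le deVA (leIl a1 a2) prec_a1 (lexx a)).
  exact: (le_prec_le deVA (leIr a2 a1) prec_a2 (lexx a')).
- move=> b b' a a' le_bb' [x [prec_xa le_b'x]] le_aa'.
  exists x; split; last exact: le_trans le_bb' le_b'x.
  exact: (le_prec_le deVA (lexx x) prec_xa le_aa').
Qed.

Lemma S_of_precB_comp b a : relcomp precB (S_of precA f) b a <-> S_of precA f b a.
Proof.
case: morf => _ _ f_prec _; split.
  move=> [y [prec_by [x [prec_xa le_y]]]]; exists x; split => //.
  exact: le_trans (prec_le deVB prec_by) le_y.
move=> [x [prec_xa le_b]].
have [x' [prec_xx' prec_x'a]] := prec_interpolate deVA prec_xa.
exists (f x'); split; last by exists x'.
have le_b_Cf := le_trans le_b (DeV_morphism_le_compl x).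
exact: (le_prec_le deVB le_b_Cf (f_prec _ _ prec_xx') (lexx _)).
Qed.

Lemma S_of_comp_precA b a : relcomp (S_of precA f) precA b a <-> S_of precA f b a.
Proof.
split.
  move=> [y [[x [prec_xy le_b]] prec_ya]]; exists x; split => //.
  exact: le_prec_le prec_xy (prec_le deVA prec_ya).
move=> [x [prec_xa le_b]]; have [c [prec_xc prec_ca]] := prec_interpolate deVA prec_xa.
by exists c; split => //; exists x.
Qed.

Lemma DeVF_morphism_S_of : DeVF_morphism precB precA (S_of precA f).
Proof.
case: morf => f0 _ f_prec _.
split; [exact: rel_S1_S4_S_of | exact: S_of_precB_comp | exact: S_of_comp_precA | |].
- move=> b [x [prec_x0 le_b]]; apply/eqP; rewrite -lex0.
  have /eqP x0 : x == \bot by rewrite -lex0; exact: (prec_le deVA prec_x0).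
  by rewrite -f0 -x0.
- move=> a1 a2 prec_a12; have [c [prec_a1c prec_ca2]] := prec_interpolate deVA prec_a12.
  have [a' [prec_Cca' prec_a'Ca1]] := prec_interpolate deVA (prec_compl deVA prec_a1c).
  exists (f c); split; last by exists c.
  exists a'; split => //.
  by have := f_prec _ _ prec_Cca'; rewrite complK => /(prec_le deVB).
Qed.

Lemma f_of_S_of a : f_of (S_of precA f) a = f a.
Proof.
have complB := deVries_complete deVB.
case: morf => _ _ _ f_approx; rewrite [RHS]f_approx.
apply: eq_bigvee => // [b [x [prec_xa le_b]]|_ [x [prec_xa ->]]].
  by apply: le_trans le_b _; apply: le_bigvee => //; exists x.
by apply: le_bigvee => //; exists x.
Qed.

End RelationOfDeVriesMorphism.

Section Composition.
Context {dA : Order.disp_t} {A : ctbDistrLatticeType dA} (precA : A -> A -> Prop)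
        {dB : Order.disp_t} {B : ctbDistrLatticeType dB} (precB : B -> B -> Prop)
        {dC : Order.disp_t} {C : ctbDistrLatticeType dC} (precC : C -> C -> Prop).
Hypotheses (deVA : is_deVries precA) (deVB : is_deVries precB)
           (deVC : is_deVries precC).

Lemma f_of_relcomp (S1 : A -> B -> Prop) (S2 : B -> C -> Prop) :
  DeVF_morphism precA precB S1 -> DeVF_morphism precB precC S2 ->
  forall c, f_of (relcomp S1 S2) c = dev_comp precC (f_of S2) (f_of S1) c.
Proof.
move=> mor1 mor2 c; have complA := deVries_complete deVA.
have [_ _ S2_precC _ _] := mor2.
apply: eq_bigvee => // [a [b [S1_ab S2_bc]]|_ [c' [prec_c'c ->]]].
  have [c' [S2_bc' prec_c'c]] := (S2_precC b c).2 S2_bc.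
  have le_b := le_f_of deVB S2_bc'.
  apply: le_trans (le_f_of deVA S1_ab) (le_trans (f_of_homo deVA mor1 le_b) _).
  by apply: le_bigvee => //; exists c'.
apply: (f_of_le deVA) => a S1_ab; apply: (le_f_of deVA).
by exists (f_of S2 c'); split; last exact: (f_of_prec_rel deVB mor2 prec_c'c).
Qed.

Lemma S_of_dev_comp (f : A -> B) (g : B -> C) :
  DeV_morphism precA precB f -> DeV_morphism precB precC g ->
  forall c a, S_of precA (dev_comp precA f g) c a <->
              relcomp (S_of precB g) (S_of precA f) c a.
Proof.
move=> morf morg c a; have complC := deVries_complete deVC.
have f_homo := DeV_morphism_homo morf; have g_homo := DeV_morphism_homo morg.
have [_ _ f_prec _] := morf; split.
  move=> [a' [prec_a'a le_c]].
  have [x [prec_a'x prec_xa]] := prec_interpolate deVA prec_a'a.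
  exists (f x); split; last by exists x.
  exists (~` f (~` a')); split; first exact: f_prec.
  apply: le_trans le_c (bigvee_le _ _) => // _ [y [prec_ya' ->]].
  apply: g_homo; apply: le_trans (DeV_morphism_le_compl morf a').
  exact: f_homo (prec_le deVA prec_ya').
move=> [b [[b' [prec_b'b le_c]] [x [prec_xa le_b]]]].
have [a' [prec_xa' prec_a'a]] := prec_interpolate deVA prec_xa.
have le_b'_fx := le_trans (prec_le deVB prec_b'b) le_b.
exists a'; split => //; apply: le_trans le_c (le_trans (g_homo _ _ le_b'_fx) _).
by apply: le_bigvee => //; exists x.
Qed.

End Composition.

Theorem theorem6p17
  (dA : Order.disp_t) (A : ctbDistrLatticeType dA) (precA : A -> A -> Prop)
  (dB : Order.disp_t) (B : ctbDistrLatticeType dB) (precB : B -> B -> Prop)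
  (dC : Order.disp_t) (C : ctbDistrLatticeType dC) (precC : C -> C -> Prop)
  (hA : is_deVries precA) (hB : is_deVries precB) (hC : is_deVries precC) :
  (* the functor DeV^F -> DeV^op, S |-> f_S, is well defined *)
  (forall S : A -> B -> Prop, DeVF_morphism precA precB S ->
     DeV_morphism precB precA (f_of S)) /\
  (forall a : A, f_of precA a = a) /\
  (forall (S1 : A -> B -> Prop) (S2 : B -> C -> Prop),
     DeVF_morphism precA precB S1 -> DeVF_morphism precB precC S2 ->
     forall c : C, f_of (relcomp S1 S2) c = dev_comp precC (f_of S2) (f_of S1) c) /\
  (* the functor DeV -> (DeV^F)^op, f |-> S_f, is well defined *)
  (forall f : A -> B, DeV_morphism precA precB f ->
     DeVF_morphism precB precA (S_of precA f)) /\
  (forall a a' : A, S_of precA id a a' <-> precA a a') /\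
  (forall (f : A -> B) (g : B -> C),
     DeV_morphism precA precB f -> DeV_morphism precB precC g ->
     forall (c : C) (a : A),
       S_of precA (dev_comp precA f g) c a <-> relcomp (S_of precB g) (S_of precA f) c a) /\
  (* they are mutually inverse *)
  (forall S : A -> B -> Prop, DeVF_morphism precA precB S ->
     forall (a : A) (b : B), S_of precB (f_of S) a b <-> S a b) /\
  (forall f : A -> B, DeV_morphism precA precB f ->
     forall a : A, f_of (S_of precA f) a = f a).
Proof.
split; first by move=> S; apply: DeV_morphism_f_of.
split; first exact: bigvee_prec.
split; first exact: f_of_relcomp.
split; first by move=> f; apply: DeVF_morphism_S_of.
split; first exact: S_of_id.
split; first exact: S_of_dev_comp.
split; first by move=> S; apply: S_of_f_of.
by move=> f; apply: f_of_S_of.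
Qed.
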